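(* Let $\mathcal{H}$ be a real Hilbert space and let $f,g\in \Gamma_0(\mathcal{H})$. Suppose that for some $x_0\in \operatorname{dom} f\cap \operatorname{dom} g$, $$\Vert \operatorname{prox}_f(x)-x_0\Vert\leq \Vert \operatorname{prox}_g(x)-x_0\Vert \quad \text{for all } x\in \mathcal{H}.$$ Then $g-g(x_0)\leq f-f(x_0)$ on $\mathcal{H}$.
   Context: $\Gamma_0(\mathcal{H})$ denotes the set of proper, convex, lower semicontinuous functions $\mathcal{H}\to\mathbb{R}\cup\{+\infty\}$. For $f\in\Gamma_0(\mathcal{H})$, $\operatorname{prox}_f(x)=\operatorname{argmin}_{y\in\mathcal{H}}\{f(y)+\tfrac12\Vert x-y\Vert^2\}$ (the minimizer exists and is unique). $\operatorname{dom} f=\{x: f(x)<+\infty\}$. *)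

From HB Require Import structures.
From mathcomp Require Import all_boot all_order all_algebra.
From mathcomp Require Import all_classical all_reals all_analysis.
Set Implicit Arguments. Unset Strict Implicit. Unset Printing Implicit Defensive.
Import Order.TTheory GRing.Theory Num.Theory.
Import numFieldNormedType.Exports.
Local Open Scope classical_set_scope.
Local Open Scope ring_scope.

(* A real Hilbert space: a complete normed space E over R whose norm comes
   from an inner product [ip] (symmetric, linear in first argument,
   |x|^2 = <x,x>). *)
Definition is_inner_product (R : realType) (E : normedModType R)
    (ip : E -> E -> R) : Prop :=
  (forall x y, ip x y = ip y x) /\
  (forall (a : R) (x y z : E), ip (a *: x + y) z = a * ip x z + ip y z) /\
  (forall x, `|x| ^+ 2 = ip x x).

Definition proper_fun (R : realType) (E : normedModType R) (f : E -> \bar R) :=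
  (forall x, f x != -oo%E) /\ (exists x, f x < +oo)%E.

Definition convex_efun (R : realType) (E : normedModType R) (f : E -> \bar R) :=
  forall (t : R) (x y : E), 0 < t < 1 ->
    (f (t *: x + (1 - t) *: y)%R <= t%:E * f x + (1 - t)%:E * f y)%E.

Definition Gamma0 (R : realType) (E : normedModType R) (f : E -> \bar R) :=
  [/\ proper_fun f, convex_efun f & lower_semicontinuous f].

Definition dom (R : realType) (E : normedModType R) (f : E -> \bar R) : set E :=
  [set x | (f x < +oo)%E].

(* prox_f(x) = argmin_y { f y + 1/2 |x - y|^2 }; the minimizer is chosen
   by [get]; for f in Gamma0 it exists and is unique. *)
Definition is_prox (R : realType) (E : normedModType R) (f : E -> \bar R)
    (x p : E) : Prop :=
  forall y : E, (f p + (2^-1 * `|x - p| ^+ 2)%:E <= f y + (2^-1 * `|x - y| ^+ 2)%:E)%E.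

Definition prox (R : realType) (E : normedModType R) (f : E -> \bar R) (x : E) : E :=
  get [set p | is_prox f x p].

(* Write q := |.|^2 / 2 and H_phi := (phi + q)^* ([prox_potential phi]).  The
   supremum defining H_phi x is attained at prox_phi x, so H_phi is convex with
   gradient prox_phi, satisfies the descent inequality with constant 1, and
   phi + q = H_phi^* (a minimizer of phi + c |y - .|^2, c large, is the
   proximal point of a suitable x).  Shifting by <., x0>, the functions
   F := H_f - <., x0> and G := H_g - <., x0> have gradients prox_f - x0 and
   prox_g - x0 and infima -(f x0 + q x0) and -(g x0 + q x0).  Along gradient
   descent for G with step t, F decreases by at most (1 - t/2)^-1 times the
   decrease of G, while the gradients become small enough to drive F to its
   infimum; letting t -> 0 gives F - inf F <= G - inf G.  Conjugating reverses
   this inequality, which is g - g x0 <= f - f x0.  Proximal points exist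
   because a minimizing sequence of phi + c |x - .|^2 is Cauchy by the
   parallelogram law and convexity, and lower semicontinuity passes to the
   limit. *)

From mathcomp Require Import all_boot all_order all_algebra.
From mathcomp Require Import all_classical all_reals all_analysis.
From mathcomp Require Import ring lra.
Import Order.TTheory GRing.Theory Num.Theory.
Import numFieldNormedType.Exports.
Local Open Scope classical_set_scope.
Local Open Scope ring_scope.

Set Implicit Arguments.
Unset Strict Implicit.
Unset Printing Implicit Defensive.

Section InnerProduct.
Variables (R : realType) (E : normedModType R) (ip : E -> E -> R).
Hypothesis ip_inner : is_inner_product ip.

Lemma ipC x y : ip x y = ip y x.
Proof. by case: ip_inner. Qed.

Lemma ipZDl a x y z : ip (a *: x + y) z = a * ip x z + ip y z.
Proof. by case: ip_inner => _ []. Qed.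

Lemma ipxx x : ip x x = `|x| ^+ 2.
Proof. by case: ip_inner => _ [_ ipE]; rewrite ipE. Qed.

Lemma ipDl x y z : ip (x + y) z = ip x z + ip y z.
Proof. by rewrite -[x]scale1r ipZDl mul1r scale1r. Qed.

Lemma ipZl a x z : ip (a *: x) z = a * ip x z.
Proof.
have ip0l : ip 0 z = 0.
  by apply: (addrI (ip 0 z)); rewrite -ipDl !addr0.
by rewrite -[a *: x]addr0 ipZDl ip0l addr0.
Qed.

Lemma ipNl x z : ip (- x) z = - ip x z.
Proof. by rewrite -scaleN1r ipZl mulN1r. Qed.

Lemma ipDr x y z : ip z (x + y) = ip z x + ip z y.
Proof. by rewrite ipC ipDl ![ip _ z]ipC. Qed.

Lemma ipZr a x z : ip z (a *: x) = a * ip z x.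
Proof. by rewrite ipC ipZl ipC. Qed.

Lemma ipNr x z : ip z (- x) = - ip z x.
Proof. by rewrite ipC ipNl ipC. Qed.

Definition ipE := (ipDl, ipDr, ipNl, ipNr, ipZl, ipZr).

Lemma sqr_normD x y : `|x + y| ^+ 2 = `|x| ^+ 2 + 2 * ip x y + `|y| ^+ 2.
Proof. by rewrite -!ipxx !ipE (ipC y x); ring. Qed.

Lemma sqr_normB x y : `|x - y| ^+ 2 = `|x| ^+ 2 - 2 * ip x y + `|y| ^+ 2.
Proof. by rewrite sqr_normD ipNr normrN; ring. Qed.

Lemma ip_le_norm x y : ip x y <= `|x| * `|y|.
Proof.
have : `|x + y| ^+ 2 <= (`|x| + `|y|) ^+ 2.
  by rewrite lerXn2r ?nnegrE ?addr_ge0 // ler_normD.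
by rewrite sqr_normD; nra.
Qed.

Lemma sqr_norm_convex (t : R) (x y z : E) :
  `|x - (t *: y + (1 - t) *: z)| ^+ 2 =
  t * `|x - y| ^+ 2 + (1 - t) * `|x - z| ^+ 2 - t * (1 - t) * `|y - z| ^+ 2.
Proof. by rewrite -!ipxx !ipE (ipC y x) (ipC z x) (ipC z y); ring. Qed.

End InnerProduct.

Section Gamma0.
Variables (R : realType) (E : normedModType R) (phi : E -> \bar R).
Hypothesis phi_G0 : Gamma0 phi.

Lemma Gamma0_cases x : phi x = +oo%E \/ exists r, phi x = r%:E.
Proof.
case: phi_G0 => -[/(_ x) + _] _ _; case: (phi x) => [r| |] // _.
- by right; exists r.
- by left.
Qed.

Lemma Gamma0_domE x : dom phi x -> phi x = (fine (phi x))%:E.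
Proof. by rewrite /dom /=; have [->|[r ->]] := Gamma0_cases x; rewrite ?ltxx. Qed.

(* Lower semicontinuity bounds [phi] from below on a ball around a point of its
   domain, and convexity along segments propagates the bound with slope [2 / r]. *)
Lemma Gamma0_minorant :
  exists al be : R, 0 <= be /\ forall z, ((al - be * `|z|)%:E <= phi z)%E.
Proof.
have [[_ [a fa_fin]] cvx lsc] := phi_G0.
have [faE|[fa faE]] := Gamma0_cases a; first by rewrite faE ltxx in fa_fin.
have /lsc[V /nbhs_ballP[r /= r_gt0 rV] Vgt] : ((fa - 1)%:E < phi a)%E.
  by rewrite faE lte_fin gtrBl.
have two_r_ge0 : 0 <= 2 / r by rewrite divr_ge0 ?ltW.
suff minor_a z : ((fa - 1 - 2 / r * `|z - a|)%:E <= phi z)%E.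
  exists (fa - 1 - 2 / r * `|a|), (2 / r); split=> // z.
  apply: le_trans (minor_a z); rewrite lee_fin.
  have : 2 / r * `|z - a| <= 2 / r * (`|z| + `|a|) by rewrite ler_wpM2l ?ler_normB.
  lra.
have [->|[fz fzE]] := Gamma0_cases z; first exact: leey.
have [z_near|z_far] := ltrP `|z - a| r.
  apply: le_trans (ltW (Vgt _ (rV _ _))); last by rewrite -ball_normE /= distrC.
  by rewrite lee_fin gerBl mulr_ge0.
set d := `|z - a| in z_far *.
have d_gt0 : 0 < d by apply: lt_le_trans z_far.
pose s := r / (2 * d).
have s_gt0 : 0 < s by rewrite divr_gt0 ?mulr_gt0.
have s01 : 0 < s < 1 by rewrite s_gt0 ltr_pdivrMr ?mulr_gt0 // mul1r; lra.
have w_near : V (s *: z + (1 - s) *: a).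
  apply: rV; rewrite -ball_normE /=.
  have -> : a - (s *: z + (1 - s) *: a) = - (s *: (z - a)).
    by rewrite scalerBl scale1r scalerBr !opprD !opprK addrCA [a + _]addrA subrr add0r.
  rewrite normrN normrZ gtr0_norm // -/d /s.
  have -> : r / (2 * d) * d = r / 2 by field; rewrite gt_eqF.
  lra.
have := lt_le_trans (Vgt _ w_near) (cvx s z a s01).
rewrite fzE faE -!EFinM -EFinD lte_fin lee_fin => w_gt.
have inv_s : 2 / r * d = s^-1 by rewrite /s invf_div; field; rewrite gt_eqF.
have : fa - fz < s^-1 by rewrite -(ltr_pM2l s_gt0) mulfV ?gt_eqF //; lra.
rewrite -inv_s; lra.
Qed.

Lemma Gamma0_penalty_gt y (M : R) : (M%:E < phi y)%E ->
  exists2 c : R, 1 <= c & forall z, (M%:E < phi z + (c * `|y - z| ^+ 2)%:E)%E.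
Proof.
have [_ _ lsc] := phi_G0.
move=> /lsc[V /nbhs_ballP[r /= r_gt0 rV] Vgt].
have [al [be [be_ge0 minor]]] := Gamma0_minorant.
pose K := M - al + be * `|y|.
pose c := 1 + (be + (`|K| + 1) / r) / r.
have Kr_ge0 : 0 <= (`|K| + 1) / r by rewrite divr_ge0 ?ltW // addr_ge0.
have c_ge1 : 1 <= c by rewrite /c lerDl divr_ge0 ?addr_ge0 // ltW.
exists c => // z; have [->|[fz fzE]] := Gamma0_cases z; first by rewrite addye ?ltry.
rewrite fzE -EFinD lte_fin.
have u_ge0 : 0 <= c * `|y - z| ^+ 2 by rewrite mulr_ge0 ?sqr_ge0 // (le_trans ler01).
have [z_near|z_far] := ltrP `|y - z| r.
  have /Vgt : V z by apply: rV; rewrite -ball_normE.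
  by rewrite fzE lte_fin; lra.
set u := `|y - z| in u_ge0 z_far *.
have := minor z; rewrite fzE lee_fin => fz_ge.
have z_le : be * `|z| <= be * (`|y| + u).
  by rewrite ler_wpM2l // -[z](subKr y) (le_trans (ler_normB _ _)) // normrN.
have crb : (c * r - be) * r = r ^+ 2 + (`|K| + 1).
  by rewrite /c; field; rewrite gt_eqF.
have crb_ge0 : 0 <= c * r - be.
  by rewrite /c mulrDl mul1r divfK ?gt_eqF //; lra.
have : (c * r - be) * r <= (c * r - be) * u by rewrite ler_wpM2l.
have : c * r * u <= c * u * u.
  by rewrite -!mulrA ler_wpM2l ?(le_trans ler01) // ler_wpM2r ?(le_trans (ltW r_gt0)).
have := ler_norm K; have := sqr_ge0 r; rewrite /K; nra.
Qed.

End Gamma0.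

Lemma ler_add_small_mul (R : realFieldType) (a b K : R) :
  (forall t, 0 < t < 1 -> a <= b + t * K) -> a <= b.
Proof.
move=> abK; apply/ler_addgt0Pr => e e_gt0.
have K1_gt0 : 0 < `|K| + 1 by rewrite ltr_wpDl.
pose t := Num.min 2^-1 (e / (`|K| + 1)).
have t_gt0 : 0 < t by rewrite lt_min invr_gt0 ltr0n divr_gt0.
have t_lt1 : t < 1 by rewrite gt_min invf_lt1 ?ltr0n ?ltr1n.
have t_le : t * (`|K| + 1) <= e by rewrite -ler_pdivlMr // ge_min lexx orbT.
apply: le_trans (abK t _) _; first by rewrite t_gt0 t_lt1.
by rewrite lerD2l; have := ler_norm K; nra.
Qed.

(* [is_prox phi x p] is [is_penalized_min phi 2^-1 x p] by conversion. *)
Definition is_penalized_min (R : realType) (E : normedModType R)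
    (phi : E -> \bar R) (c : R) (x p : E) : Prop :=
  forall y, (phi p + (c * `|x - p| ^+ 2)%:E <= phi y + (c * `|x - y| ^+ 2)%:E)%E.

Section PenalizedMinCharacterization.
Variables (R : realType) (E : normedModType R) (ip : E -> E -> R).
Hypothesis ip_inner : is_inner_product ip.
Variables (phi : E -> \bar R) (c : R) (x p : E).
Hypotheses (phi_G0 : Gamma0 phi) (c_gt0 : 0 < c).

Lemma penalized_min_dom : is_penalized_min phi c x p -> dom phi p.
Proof.
have [[_ [a fa_fin]] _ _] := phi_G0.
have [faE|[r faE]] := Gamma0_cases phi_G0 a; first by rewrite faE ltxx in fa_fin.
move=> /(_ a); rewrite faE.
by rewrite /dom /=; case: (phi p) => // r' _; exact: ltry.
Qed.

Lemma penalized_min_variational : is_penalized_min phi c x p ->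
  forall z, ((fine (phi p) + 2 * c * ip (x - p) (z - p))%:E <= phi z)%E.
Proof.
move=> p_min; have pE := Gamma0_domE phi_G0 (penalized_min_dom p_min).
move=> z; have [->|[fz fzE]] := Gamma0_cases phi_G0 z; first exact: leey.
rewrite fzE lee_fin; set fp := fine (phi p) in pE *.
suff growth : fp + c * `|x - p| ^+ 2 + c * `|z - p| ^+ 2 <= fz + c * `|x - z| ^+ 2.
  have xzE : x - z = (x - p) - (z - p) by rewrite opprB addrA subrK.
  by move: growth; rewrite xzE (sqr_normB ip_inner (x - p)); lra.
apply: (@ler_add_small_mul _ _ _ (c * `|z - p| ^+ 2)) => t /andP[t_gt0 t_lt1].
pose zt := t *: z + (1 - t) *: p.
have cvx : (phi zt <= t%:E * phi z + (1 - t)%:E * phi p)%E.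
  by case: phi_G0 => _ + _; apply; rewrite t_gt0 t_lt1.
rewrite fzE pE -!EFinM -EFinD in cvx.
have [ztE|[fzt fztE]] := Gamma0_cases phi_G0 zt; first by rewrite ztE leye_eq in cvx.
have := p_min zt; rewrite pE fztE -!EFinD lee_fin (sqr_norm_convex ip_inner).
move: cvx; rewrite fztE lee_fin => cvx p_le.
rewrite -(ler_pM2l t_gt0); nra.
Qed.

Lemma variational_penalized_min : dom phi p ->
  (forall z, ((fine (phi p) + 2 * c * ip (x - p) (z - p))%:E <= phi z)%E) ->
  is_penalized_min phi c x p.
Proof.
move=> /(Gamma0_domE phi_G0) pE vi z.
have [->|[fz fzE]] := Gamma0_cases phi_G0 z; first by rewrite addye ?leey.
have := vi z; rewrite pE fzE -!EFinD !lee_fin.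
have xzE : x - z = (x - p) - (z - p) by rewrite opprB addrA subrK.
rewrite xzE (sqr_normB ip_inner (x - p)).
by have := mulr_ge0 (ltW c_gt0) (sqr_ge0 `|z - p|); lra.
Qed.

End PenalizedMinCharacterization.

Lemma cvgn_sqr_dist_harmonic (R : realType) (E : completeNormedModType R)
    (u : nat -> E) (K : R) :
  (forall i j, `|u i - u j| ^+ 2 <= K * (i.+1%:R^-1 + j.+1%:R^-1)) -> cvgn u.
Proof.
move=> uK; apply: cauchy_cvg; apply: cauchy_exP => e e_gt0.
have K1_gt0 : 0 < `|K| + 1 by rewrite ltr_wpDl.
pose d := e ^+ 2 / (2 * (`|K| + 1)).
have d_gt0 : 0 < d by rewrite divr_gt0 ?exprn_gt0 ?mulr_gt0.
have [N _ Nd] := near_infty_natSinv_lt (PosNum d_gt0).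
exists (u N); exists N => // n /= Nn; rewrite -ball_normE /=.
have := uK N n; have := Nd N (leqnn N); have := Nd n Nn; rewrite /=.
set a := N.+1%:R^-1; set b := n.+1%:R^-1 => bd ad uNn.
have ab_gt0 : 0 < a + b by rewrite addr_gt0 // invr_gt0 ltr0Sn.
have : K * (a + b) <= (`|K| + 1) * (a + b).
  by rewrite ler_wpM2r ?ltW //; have := ler_norm K; lra.
have : (`|K| + 1) * (a + b) < (`|K| + 1) * (2 * d) by rewrite ltr_pM2l //; lra.
have -> : (`|K| + 1) * (2 * d) = e ^+ 2 by rewrite /d; field; rewrite gt_eqF.
by have := normr_ge0 (u N - u n); nra.
Qed.

Lemma lower_semicontinuous_cvg_le (R : realType) (T : topologicalType)
    (f : T -> \bar R) (u : nat -> T) (v : nat -> R) (p : T) (l : R) :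
  lower_semicontinuous f -> u @ \oo --> p -> v @ \oo --> l ->
  (forall n, (f (u n) <= (v n)%:E)%E) -> (f p <= l%:E)%E.
Proof.
move=> lsc u_p v_l fuv; rewrite leNgt; apply/negP => l_lt.
have [r l_r r_lt] : exists2 r, l < r & (r%:E < f p)%E.
  move: l_lt; case: (f p) => [s| |] //; rewrite ?lte_fin => l_s.
    by exists ((l + s) / 2); rewrite ?lte_fin; lra.
  by exists (l + 1); rewrite ?ltry //; lra.
have [V pV Vr] := lsc p r r_lt.
near \oo => n.
have : (r%:E < (v n)%:E)%E.
  by apply: lt_le_trans (fuv n); apply: Vr; near: n; exact: u_p.
rewrite lte_fin; apply/negP; rewrite -leNgt ltW //; near: n.
exact: cvgr_lt v_l r l_r.
Unshelve. all: by end_near. Qed.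

Section PenalizedMinExistence.
Variables (R : realType) (E : completeNormedModType R) (ip : E -> E -> R).
Hypothesis ip_inner : is_inner_product ip.
Variables (phi : E -> \bar R) (c : R) (x : E).
Hypotheses (phi_G0 : Gamma0 phi) (c_gt0 : 0 < c).

Let J z := fine (phi z) + c * `|x - z| ^+ 2.
Let S := J @` dom phi.

Let S_has_inf : has_inf S.
Proof.
split; first by have [[_ [a a_dom]] _ _] := phi_G0; exists (J a), a.
have [al [be [be_ge0 minor]]] := Gamma0_minorant phi_G0.
exists (al - be * `|x| - be ^+ 2 / (4 * c)) => _ [z z_dom <-].
have := minor z; rewrite (Gamma0_domE phi_G0 z_dom) lee_fin /J.
set u := `|x - z|.
have : be * `|z| <= be * (`|x| + u).
  by rewrite ler_wpM2l // -[z](subKr x) (le_trans (ler_normB _ _)) // normrN.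
have square : c * u ^+ 2 - be * u = c * (u - be / (2 * c)) ^+ 2 - be ^+ 2 / (4 * c).
  by field; rewrite gt_eqF.
have : 0 <= c * (u - be / (2 * c)) ^+ 2 by rewrite mulr_ge0 ?sqr_ge0 ?ltW.
lra.
Qed.

Let S_midpoint z w : dom phi z -> dom phi w ->
  c / 4 * `|z - w| ^+ 2 <= (J z + J w) / 2 - inf S.
Proof.
move=> z_dom w_dom; pose mid := 2^-1 *: z + (1 - 2^-1) *: w.
have cvx : (phi mid <= 2^-1%:E * phi z + (1 - 2^-1)%:E * phi w)%E.
  by case: phi_G0 => _ + _; apply; rewrite invr_gt0 invf_lt1 ?ltr0n ?ltr1n.
rewrite (Gamma0_domE phi_G0 z_dom) (Gamma0_domE phi_G0 w_dom) -!EFinM -EFinD in cvx.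
have mid_dom : dom phi mid by rewrite /dom /= (le_lt_trans cvx) ?ltry.
have := ge_inf (proj2 S_has_inf) (ex_intro2 _ _ mid mid_dom erefl).
move: cvx; rewrite (Gamma0_domE phi_G0 mid_dom) lee_fin /J.
rewrite (sqr_norm_convex ip_inner); lra.
Qed.

Let minimizing zs := forall n, dom phi (zs n) /\ J (zs n) < inf S + n.+1%:R^-1.

Let exists_minimizing : exists zs, minimizing zs.
Proof.
have near_inf n : exists z, dom phi z /\ J z < inf S + n.+1%:R^-1.
  have e_gt0 : 0 < n.+1%:R^-1 :> R by rewrite invr_gt0 ltr0Sn.
  by have [_ [z z_dom <-] Jz] := inf_adherent e_gt0 S_has_inf; exists z.
by have [zs zs_min] := choice near_inf; exists zs.
Qed.

Let minimizing_cvg zs : minimizing zs -> cvgn zs.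
Proof.
move=> zs_min; apply: (@cvgn_sqr_dist_harmonic _ _ _ (2 / c)) => i j.
have [zi_dom Ji] := zs_min i; have [zj_dom Jj] := zs_min j.
have := S_midpoint zi_dom zj_dom.
set a := i.+1%:R^-1 in Ji *; set b := j.+1%:R^-1 in Jj * => mid.
have cE : c * (2 / c * (a + b)) = 2 * (a + b).
  by rewrite mulrA mulrCA mulfV ?gt_eqF // mulr1.
have : c * `|zs i - zs j| ^+ 2 <= c * (2 / c * (a + b)) by rewrite cE; lra.
by rewrite ler_pM2l.
Qed.

Let minimizing_lim_le zs : minimizing zs ->
  (phi (lim (zs @ \oo)) + (c * `|x - lim (zs @ \oo)| ^+ 2)%:E <= (inf S)%:E)%E.
Proof.
move=> zs_min; have zs_cvg := minimizing_cvg zs_min; set p := lim _.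
have v_cvg : (fun n => inf S + n.+1%:R^-1 - c * `|x - zs n| ^+ 2) @ \oo -->
    inf S - c * `|x - p| ^+ 2.
  rewrite -[inf S in X in _ --> X]addr0; apply: cvgB.
    exact: (cvgD (cvg_cst _) cvg_harmonic).
  have x_zs : `|x - zs n| @[n --> \oo] --> `|x - p|.
    exact: cvg_norm (cvgB (cvg_cst x) zs_cvg).
  exact: (@cvgM _ _ _ _ (fun=> c) (fun n => `|x - zs n| ^+ 2) _ _
    (cvg_cst c) (cvgM x_zs x_zs)).
rewrite -leeBrDr // -EFinB; have [_ _ lsc] := phi_G0.
apply: (lower_semicontinuous_cvg_le lsc zs_cvg v_cvg) => n /=.
have [zn_dom Jn] := zs_min n; rewrite /J in Jn.
rewrite (Gamma0_domE phi_G0 zn_dom) lee_fin.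
by move: Jn; set e := n.+1%:R^-1; lra.
Qed.

Lemma exists_penalized_min : exists p, is_penalized_min phi c x p.
Proof.
have [zs zs_min] := exists_minimizing.
exists (lim (zs @ \oo)) => y; apply: le_trans (minimizing_lim_le zs_min) _.
have [->|[r yE]] := Gamma0_cases phi_G0 y; first by rewrite addye ?leey.
have y_dom : dom phi y by rewrite /dom /= yE ltry.
rewrite (Gamma0_domE phi_G0 y_dom) -EFinD lee_fin.
by apply: ge_inf (proj2 S_has_inf) _ _; exists y.
Qed.

End PenalizedMinExistence.

(* The conjugate of [phi + |.|^2 / 2], whose supremum is attained at [prox phi x]. *)
Definition prox_potential (R : realType) (E : normedModType R) (ip : E -> E -> R)
    (phi : E -> \bar R) (x : E) : R :=
  ip x (prox phi x) - fine (phi (prox phi x)) - 2^-1 * `|prox phi x| ^+ 2.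

Definition is_infimum (T : Type) (R : numDomainType) (F : T -> R) (l : R) :=
  (forall x, l <= F x) /\ (forall e, 0 < e -> exists x, F x < l + e).

Section ProxPotential.
Variables (R : realType) (E : completeNormedModType R) (ip : E -> E -> R).
Hypothesis ip_inner : is_inner_product ip.
Variable phi : E -> \bar R.
Hypothesis phi_G0 : Gamma0 phi.

Local Notation H := (prox_potential ip phi).

Let half_gt0 : 0 < 2^-1 :> R. Proof. by rewrite invr_gt0. Qed.

Lemma is_prox_prox x : is_prox phi x (prox phi x).
Proof.
have [p p_min] := exists_penalized_min ip_inner x phi_G0 half_gt0.
exact: (getPex (ex_intro _ p p_min)).
Qed.

Lemma prox_dom x : dom phi (prox phi x).
Proof. exact: penalized_min_dom phi_G0 (is_prox_prox x). Qed.

Lemma prox_variational x z :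
  ((fine (phi (prox phi x)) + ip (x - prox phi x) (z - prox phi x))%:E <= phi z)%E.
Proof.
have := penalized_min_variational ip_inner phi_G0 (is_prox_prox x) z.
by rewrite mulfV ?mul1r // pnatr_eq0.
Qed.

Lemma prox_potential_ge x y : dom phi y ->
  ip x y - fine (phi y) - 2^-1 * `|y| ^+ 2 <= H x.
Proof.
move=> /(Gamma0_domE phi_G0) yE; have := is_prox_prox x y.
rewrite (Gamma0_domE phi_G0 (prox_dom x)) yE -!EFinD lee_fin.
by rewrite /prox_potential !(sqr_normB ip_inner); lra.
Qed.

Lemma prox_potential_is_prox x p : is_prox phi x p ->
  H x = ip x p - fine (phi p) - 2^-1 * `|p| ^+ 2.
Proof.
move=> p_prox; have p_dom := penalized_min_dom phi_G0 p_prox.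
apply/eqP; rewrite eq_le prox_potential_ge // andbT.
have := p_prox (prox phi x).
rewrite (Gamma0_domE phi_G0 (prox_dom x)) (Gamma0_domE phi_G0 p_dom) -!EFinD lee_fin.
by rewrite /prox_potential !(sqr_normB ip_inner); lra.
Qed.

Lemma prox_potential_shift_subgradient y x z :
  H x - ip x y + ip (prox phi x - y) (z - x) <= H z - ip z y.
Proof.
have := prox_potential_ge z (prox_dom x).
rewrite /prox_potential !(ipE ip_inner) (ipC ip_inner (prox phi x) z).
by rewrite (ipC ip_inner (prox phi x) x) (ipC ip_inner y z) (ipC ip_inner y x); lra.
Qed.

Lemma prox_potential_shift_descent y x z :
  H z - ip z y <= H x - ip x y + ip (prox phi x - y) (z - x) + 2^-1 * `|z - x| ^+ 2.
Proof.
have := prox_variational x (prox phi z).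
rewrite (Gamma0_domE phi_G0 (prox_dom z)) lee_fin /prox_potential.
set p := prox phi x; set q := prox phi z.
have := sqr_ge0 `|(z - x) - (q - p)|.
rewrite -!(ipxx ip_inner) !(ipE ip_inner).
rewrite !(ipC ip_inner z x) !(ipC ip_inner q x) !(ipC ip_inner p x) !(ipC ip_inner q z).
rewrite !(ipC ip_inner p z) !(ipC ip_inner q p) !(ipC ip_inner y z) !(ipC ip_inner y x).
lra.
Qed.

Lemma prox_potential_conj y (M : R) :
  (M%:E < phi y + (2^-1 * `|y| ^+ 2)%:E)%E -> exists x, M < ip x y - H x.
Proof.
move=> M_lt; have : ((M - 2^-1 * `|y| ^+ 2)%:E < phi y)%E by rewrite EFinB lteBlDr.
move=> /(Gamma0_penalty_gt phi_G0)[c c_ge1 c_pen].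
have c_gt0 : 0 < c by apply: lt_le_trans c_ge1.
have [yc yc_min] := exists_penalized_min ip_inner y phi_G0 c_gt0.
have yc_dom := penalized_min_dom phi_G0 yc_min.
pose x := yc + (2 * c) *: (y - yc).
(* [x] is chosen so that the optimality condition of [yc] becomes that of a prox. *)
have yc_prox : is_prox phi x yc.
  apply: (variational_penalized_min ip_inner phi_G0 half_gt0 yc_dom) => z.
  have -> : x - yc = (2 * c) *: (y - yc) by rewrite /x addrC addKr.
  rewrite (ipZl ip_inner) mulfV ?mul1r ?pnatr_eq0 //.
  by have := penalized_min_variational ip_inner phi_G0 yc_min z.
exists x; rewrite (prox_potential_is_prox yc_prox).
have -> : ip x y - (ip x yc - fine (phi yc) - 2^-1 * `|yc| ^+ 2) =
    fine (phi yc) + 2^-1 * `|y| ^+ 2 + (2 * c - 2^-1) * `|y - yc| ^+ 2.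
  by rewrite /x -!(ipxx ip_inner) !(ipE ip_inner) (ipC ip_inner yc y); field.
have := c_pen yc; rewrite (Gamma0_domE phi_G0 yc_dom) -EFinD lte_fin.
have c1_ge0 : 0 <= c - 1 by rewrite subr_ge0.
have := sqr_ge0 `|y - yc|.
by have := mulr_ge0 c1_ge0 (sqr_ge0 `|y - yc|); lra.
Qed.

Lemma prox_potential_shift_inf y : dom phi y ->
  is_infimum (fun x => H x - ip x y) (- (fine (phi y) + 2^-1 * `|y| ^+ 2)).
Proof.
move=> y_dom; split=> [x|e e_gt0]; first by have := prox_potential_ge x y_dom; lra.
have M_lt : ((fine (phi y) + 2^-1 * `|y| ^+ 2 - e)%:E <
    phi y + (2^-1 * `|y| ^+ 2)%:E)%E.
  by rewrite (Gamma0_domE phi_G0 y_dom) -EFinD lte_fin; lra.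
by have [x x_gt] := prox_potential_conj M_lt; exists x; lra.
Qed.

End ProxPotential.

Lemma exists_le_mean (R : realDomainType) (u : nat -> R) n : (0 < n)%N ->
  exists2 k, (k < n)%N & n%:R * u k <= \sum_(j < n) u j.
Proof.
move=> n_gt0.
have [k _ k_min] := @arg_minP _ R 'I_n (Ordinal n_gt0) xpredT (fun j => u j) isT.
exists k => //; have -> : n%:R * u k = \sum_(j < n) u k.
  by rewrite sumr_const card_ord mulr_natl.
by apply: ler_sum => j _; exact: k_min.
Qed.

Section GradientComparison.
Variables (R : realType) (E : normedModType R) (ip : E -> E -> R).
Hypothesis ip_inner : is_inner_product ip.
Variables (F G : E -> R) (a b : E -> E) (lf lg : R).
Hypothesis G_subgrad : forall x z, G x + ip (a x) (z - x) <= G z.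
Hypothesis G_descent :
  forall x z, G z <= G x + ip (a x) (z - x) + 2^-1 * `|z - x| ^+ 2.
Hypothesis F_subgrad : forall x z, F x + ip (b x) (z - x) <= F z.
Hypothesis ba_norm : forall x, `|b x| <= `|a x|.
Hypotheses (G_inf : is_infimum G lg) (F_inf : is_infimum F lf).

Section Descent.
Variables (t : R) (x : E).
Hypotheses (t_gt0 : 0 < t) (t_le1 : t <= 1).

Let z n := iter n (fun w => w - t *: a w) x.
Let A n := `|a (z n)| ^+ 2.

Let zS n : z n.+1 - z n = - (t *: a (z n)).
Proof. by rewrite [z n.+1]/= addrAC subrr add0r. Qed.

Let A_ge0 n : 0 <= A n. Proof. exact: sqr_ge0. Qed.

Lemma descent_step_G n : G (z n.+1) <= G (z n) - t * (1 - t / 2) * A n.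
Proof.
have := G_descent (z n) (z n.+1).
rewrite zS (ipNr ip_inner) (ipZr ip_inner) (ipxx ip_inner) normrN normrZ.
by rewrite gtr0_norm // exprMn /A; lra.
Qed.

Lemma descent_step_F n :
  (1 - t / 2) * (F (z n) - F (z n.+1)) <= G (z n) - G (z n.+1).
Proof.
have dF : F (z n) - F (z n.+1) <= t * A n.
  have := F_subgrad (z n) (z n.+1); rewrite zS (ipNr ip_inner) (ipZr ip_inner).
  have : ip (b (z n)) (a (z n)) <= A n.
    by rewrite (le_trans (ip_le_norm ip_inner _ _)) // /A expr2 ler_wpM2r.
  by rewrite -(ler_pM2l t_gt0); lra.
have t2_ge0 : 0 <= 1 - t / 2 by have := t_le1; lra.
by have := ler_wpM2l t2_ge0 dF; have := descent_step_G n; lra.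
Qed.

Lemma descent_step_dist m n : `|z n.+1 - m| ^+ 2 <=
  `|z n - m| ^+ 2 + 2 * t * (G m - lg) + t ^+ 2 * A n.
Proof.
have ipa : G (z n) - G m <= ip (z n - m) (a (z n)).
  by have := G_subgrad (z n) m; rewrite -opprB (ipNr ip_inner) (ipC ip_inner); lra.
have -> : z n.+1 - m = (z n - m) - t *: a (z n) by rewrite [z n.+1]/= addrAC.
rewrite (sqr_normB ip_inner) (ipZr ip_inner) normrZ gtr0_norm // exprMn.
by have := G_inf.1 (z n); have := ltW t_gt0; rewrite /A; nra.
Qed.

Lemma descent_F_G n : (1 - t / 2) * (F x - F (z n)) <= G x - G (z n).
Proof.
elim: n => [|n IH]; first by rewrite /z /= !subrr mulr0.
by have := descent_step_F n; lra.
Qed.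

Lemma descent_sum n : t * (1 - t / 2) * \sum_(k < n) A k <= G x - G (z n).
Proof.
elim: n => [|n IH]; first by rewrite big_ord0 mulr0 /z /= subrr.
by rewrite big_ord_recr /= mulrDr; have := descent_step_G n; lra.
Qed.

Lemma descent_dist m n : `|z n - m| ^+ 2 <=
  `|x - m| ^+ 2 + n%:R * (2 * t * (G m - lg)) + t ^+ 2 * \sum_(k < n) A k.
Proof.
elim: n => [|n IH]; first by rewrite big_ord0 /z /= mul0r mulr0 !addr0.
by rewrite big_ord_recr /= -natr1 mulrDr; have := descent_step_dist m n; lra.
Qed.

Let sum_A_ge0 n : 0 <= \sum_(k < n) A k.
Proof. by apply: sumr_ge0 => k _; exact: A_ge0. Qed.

Let t_sum_A n : t * \sum_(k < n) A k <= 2 * (G x - lg).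
Proof.
have := descent_sum n; have := G_inf.1 (z n).
have t1_ge0 : 0 <= 1 - t by rewrite subr_ge0.
by have := mulr_ge0 (mulr_ge0 (ltW t_gt0) (sum_A_ge0 n)) t1_ge0; lra.
Qed.

Lemma descent_small_gradient n : (0 < n)%N ->
  exists2 k, (k < n)%N & n%:R * t * A k <= 2 * (G x - lg).
Proof.
move=> n_gt0; have [k kn k_le] := exists_le_mean A n_gt0.
exists k => //; have := ler_wpM2l (ltW t_gt0) k_le; have := t_sum_A n; lra.
Qed.

Lemma descent_dist_bound m k : `|z k - m| ^+ 2 <=
  `|x - m| ^+ 2 + k%:R * (2 * t * (G m - lg)) + 2 * (G x - lg).
Proof.
have : t ^+ 2 * \sum_(j < k) A j <= t * \sum_(j < k) A j.
  by rewrite expr2 -mulrA ler_piMl // mulr_ge0 // ltW.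
by have := descent_dist m k; have := t_sum_A k; lra.
Qed.

Lemma descent_F_le w k : F (z k) <= F w + `|a (z k)| * `|w - z k|.
Proof.
have ip_wz : ip (b (z k)) (w - z k) = - ip (b (z k)) (z k - w).
  by rewrite -(ipNr ip_inner) opprB.
have := F_subgrad (z k) w; rewrite ip_wz.
have := ip_le_norm ip_inner (b (z k)) (z k - w); rewrite distrC.
by have := ler_wpM2r (normr_ge0 (w - z k)) (ba_norm (z k)); lra.
Qed.

Lemma descent_sqr_dist_bound m w k : `|w - z k| ^+ 2 <=
  2 * `|w - m| ^+ 2 + 2 * `|x - m| ^+ 2 + 4 * (G x - lg)
  + 4 * (k%:R * t * (G m - lg)).
Proof.
have tri : `|w - z k| ^+ 2 <= (`|w - m| + `|z k - m|) ^+ 2.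
  rewrite lerXn2r ?nnegrE ?addr_ge0 ?normr_ge0 //.
  by rewrite (le_trans (ler_distD m _ _)) // (distrC m).
have := descent_dist_bound m k; have := sqr_ge0 (`|w - m| - `|z k - m|).
lra.
Qed.

(* The choice of [gam] and [n] below makes both terms of the bound
   [(|a z_k| |w - z_k|)^2 <= A_k C + 8 S (G m - lg)] smaller than [e^2 / 8]. *)
Lemma descent_F_near_inf e : 0 < e -> exists k, F (z k) < lf + e.
Proof.
move=> e_gt0; pose S := G x - lg.
have S_ge0 : 0 <= S by rewrite subr_ge0; exact: G_inf.1.
have e2_gt0 : 0 < e ^+ 2 by rewrite exprn_gt0.
pose gam := e ^+ 2 / (64 * (S + 1)).
have gamE : gam * (64 * (S + 1)) = e ^+ 2.
  by rewrite /gam divfK // gt_eqF // mulr_gt0 // ltr_wpDl.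
have gam_gt0 : 0 < gam by rewrite divr_gt0 // mulr_gt0 // ltr_wpDl.
have [m m_lt] := G_inf.2 gam gam_gt0.
have gm_ge0 : 0 <= G m - lg by rewrite subr_ge0; exact: G_inf.1.
have [w w_lt] := F_inf.2 (e / 2) (divr_gt0 e_gt0 (ltr0n _ 2)).
pose C := 2 * `|w - m| ^+ 2 + 2 * `|x - m| ^+ 2 + 4 * S.
have C_ge0 : 0 <= C by rewrite /C; have := sqr_ge0 `|w - m|; have := sqr_ge0 `|x - m|; lra.
pose n := (Num.truncn (16 * S * C / (t * e ^+ 2))).+1.
have n_big : 16 * S * C < n%:R * t * e ^+ 2.
  have := truncnS_gt (16 * S * C / (t * e ^+ 2)).
  by rewrite ltr_pdivrMr ?mulr_gt0 // mulrA -/n.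
have [k kn k_small] := descent_small_gradient (ltn0Sn _ : (0 < n)%N).
rewrite -/S in k_small; exists k.
suff : `|a (z k)| * `|w - z k| < e / 2 by have := descent_F_le w k; lra.
have D_le : `|w - z k| ^+ 2 <= C + 4 * (n%:R * t * (G m - lg)).
  have : k%:R * t * (G m - lg) <= n%:R * t * (G m - lg).
    by rewrite -!mulrA; apply: ler_wpM2r; [rewrite mulr_ge0 // ltW | rewrite ler_nat ltnW].
  by have := descent_sqr_dist_bound m w k; rewrite -/S /C; lra.
have AC : A k * C < e ^+ 2 / 8.
  rewrite -(ltr_pM2l (_ : 0 < n%:R * t)) ?mulr_gt0 ?ltr0Sn //.
  by have := ler_wpM2r C_ge0 k_small; lra.
have AG : 4 * (n%:R * t * A k) * (G m - lg) <= e ^+ 2 / 8.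
  have gm_le : G m - lg <= gam by rewrite lerBlDl ltW.
  have := ler_wpM2l S_ge0 gm_le; have := ler_wpM2r gm_ge0 k_small.
  by have := ltW gam_gt0; lra.
have : (`|a (z k)| * `|w - z k|) ^+ 2 < (e / 2) ^+ 2.
  by rewrite exprMn -/(A k); have := ler_wpM2l (A_ge0 k) D_le; lra.
by have := mulr_ge0 (normr_ge0 (a (z k))) (normr_ge0 (w - z k)); nra.
Qed.

Lemma descent_comparison : (1 - t / 2) * (F x - lf) <= G x - lg.
Proof.
apply/ler_addgt0Pr => e e_gt0; have [k Fk] := descent_F_near_inf e_gt0.
have := descent_F_G k; have := G_inf.1 (z k); have := F_inf.1 (z k).
by have := ltW t_gt0; nra.
Qed.

End Descent.

Lemma gradient_comparison x : F x - lf <= G x - lg.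
Proof.
apply: (@ler_add_small_mul _ _ _ ((F x - lf) / 2)) => t /andP[t_gt0 t_lt1].
by have := @descent_comparison t x t_gt0 (ltW t_lt1); lra.
Qed.

End GradientComparison.

Lemma lee_fin_of_forall_lt (R : realType) (u : \bar R) (v : R) :
  (forall M : R, (M%:E < u)%E -> M <= v) -> (u <= v%:E)%E.
Proof.
case: u => [r| |] u_le.
- rewrite lee_fin leNgt; apply/negP => v_lt_r.
  by have := u_le ((v + r) / 2); rewrite lte_fin; lra.
- by have := u_le (v + 1) (ltry _); move=> ?; exfalso; lra.
- exact: leNye.
Qed.

Section ProxComparison.
Variables (R : realType) (E : completeNormedModType R) (ip : E -> E -> R).
Hypothesis ip_inner : is_inner_product ip.
Variables (f g : E -> \bar R).
Hypotheses (f_G0 : Gamma0 f) (g_G0 : Gamma0 g).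

Lemma prox_potential_le x0 : dom f x0 -> dom g x0 ->
  (forall x, `|prox f x - x0| <= `|prox g x - x0|) ->
  forall x, prox_potential ip f x + fine (f x0) <= prox_potential ip g x + fine (g x0).
Proof.
move=> x0f x0g prox_le x.
have := gradient_comparison ip_inner
  (F := fun x => prox_potential ip f x - ip x x0)
  (G := fun x => prox_potential ip g x - ip x x0)
  (prox_potential_shift_subgradient ip_inner g_G0 x0)
  (prox_potential_shift_descent ip_inner g_G0 x0)
  (prox_potential_shift_subgradient ip_inner f_G0 x0) prox_le
  (prox_potential_shift_inf ip_inner g_G0 x0g)
  (prox_potential_shift_inf ip_inner f_G0 x0f) x.
by rewrite /=; lra.
Qed.

Lemma Gamma0_le_of_prox_potential_le (a b : R) :
  (forall x, prox_potential ip f x + a <= prox_potential ip g x + b) ->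
  forall y, (g y - b%:E <= f y - a%:E)%E.
Proof.
move=> H_le y; have [->|[r fyE]] := Gamma0_cases f_G0 y.
  by rewrite addye ?leey.
rewrite fyE leeBlDr // -!EFinD; apply: lee_fin_of_forall_lt => M M_lt.
have [|x x_lt] := prox_potential_conj ip_inner g_G0 (M := M + 2^-1 * `|y| ^+ 2) (y := y).
  by rewrite EFinD lteD2rE.
have f_dom : dom f y by rewrite /dom /= fyE ltry.
have := prox_potential_ge ip_inner f_G0 x f_dom; rewrite fyE /=.
by have := H_le x; lra.
Qed.

End ProxComparison.

Theorem theorem2 (R : realType) (E : completeNormedModType R)
  (ip : E -> E -> R) (Hip : is_inner_product ip)
  (f g : E -> \bar R) (Hf : Gamma0 f) (Hg : Gamma0 g)
  (x0 : E) (Hx0 : x0 \in dom f `&` dom g)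
  (Hprox : forall x : E, `|prox f x - x0| <= `|prox g x - x0|) :
  forall x : E, (g x - g x0 <= f x - f x0)%E.
Proof.
have /set_mem[x0f x0g] := Hx0.
rewrite (Gamma0_domE Hf x0f) (Gamma0_domE Hg x0g).
apply: (Gamma0_le_of_prox_potential_le Hip Hf Hg).
exact: (prox_potential_le Hip Hf Hg x0f x0g Hprox).
Qed.
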